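(* Each of the following thirteen representations $\eta_i:\mathrm{STVB}_2\to M_3(\mathbb{C})$ (for every admissible choice of complex parameters) is unfaithful, i.e. not injective. Each $\eta_i$ is given by $2\times2$ matrices $S,R,T,G$ via $\eta_i(\sigma_1)=S\oplus1$, $\eta_i(\sigma_1^{-1})=S^{-1}\oplus1$, $\eta_i(\rho_1)=R\oplus1$, $\eta_i(\tau_1)=T\oplus1$, $\eta_i(\gamma_1)=G\oplus1$, $\eta_i(\gamma_2)=1\oplus G$: (1) $S=\begin{pmatrix}a&b\\ \frac{b}{x^2}&a\end{pmatrix}$, $R=\begin{pmatrix}0&x\\ \frac1x&0\end{pmatrix}$, $T=\begin{pmatrix}f&g\\ \frac{g}{x^2}&f\end{pmatrix}$, $G=\mathrm{diag}(-1,1)$, $a^2x^2-b^2\neq0$, $x\neq0$; (2) $S=\begin{pmatrix}a&b\\ \frac{b-bz^2}{x^2}&\frac{ax+2bz}{x}\end{pmatrix}$, $R=\begin{pmatrix}-z&x\\ \frac{1-z^2}{x}&z\end{pmatrix}$, $T=\begin{pmatrix}f&g\\ \frac{g-gz^2}{x^2}&\frac{fx+2gz}{x}\end{pmatrix}$, $G=I_2$, $a^2x^2+2abxz-b^2+b^2z^2\neq0$, $x\neq0$; (3) $S=\begin{pmatrix}a&b\\ c&d\end{pmatrix}$, $R=-I_2$, $T=\begin{pmatrix}f&g\\ \frac{cg}{b}&\frac{bf-ag+dg}{b}\end{pmatrix}$, $G=I_2$, $ad-bc\neq0$, $b\neq0$; (4) as (3) but $R=I_2$; (5) $S=aI_2$,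 $R=-I_2$, $T=\begin{pmatrix}f&g\\ h&k\end{pmatrix}$, $G=I_2$, $a\neq0$; (6) $S=\begin{pmatrix}a&0\\ c&d\end{pmatrix}$, $R=-I_2$, $T=\begin{pmatrix}f&0\\ h&\frac{cf-ah+dh}{c}\end{pmatrix}$, $G=I_2$, $ad\neq0$, $c\neq0$; (7) $S=\begin{pmatrix}a&0\\ c&\frac{-2c+ay}{y}\end{pmatrix}$, $R=\begin{pmatrix}1&0\\ y&-1\end{pmatrix}$, $T=\begin{pmatrix}f&0\\ h&\frac{-2h+fy}{y}\end{pmatrix}$, $G=I_2$, $a(-2c+ay)\neq0$, $y\neq0$; (8) $S=\begin{pmatrix}a&0\\ c&\frac{2c+ay}{y}\end{pmatrix}$, $R=\begin{pmatrix}-1&0\\ y&1\end{pmatrix}$, $T=\begin{pmatrix}f&0\\ h&\frac{2h+fy}{y}\end{pmatrix}$, $G=I_2$, $a(2c+ay)\neq0$, $y\neq0$; (9) $S=aI_2$, $R=I_2$, $T=\begin{pmatrix}f&g\\ h&k\end{pmatrix}$, $G=I_2$, $a\neq0$; (10) as (6) but $R=I_2$; (11) $S=\mathrm{diag}(a,d)$, $R=\mathrm{diag}(1,-1)$, $T=\mathrm{diag}(f,k)$, $G=I_2$, $ad\neq0$; (12) $S=\mathrm{diag}(a,d)$, $R=\mathrm{diag}(-1,1)$, $T=\mathrm{diag}(f,k)$, $G=I_2$, $ad\neq0$; (13) $S=\mathrm{diag}(a,d)$, $R=I_2$, $T=\mathrm{diag}(f,k)$, $G=I_2$, $ad\ne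q0$.
   Context: The singular twisted virtual braid monoid $\mathrm{STVB}_2$ is the monoid generated by $\sigma_1,\sigma_1^{-1},\rho_1,\tau_1,\gamma_1,\gamma_2$ with defining relations $\sigma_1\sigma_1^{-1}=\sigma_1^{-1}\sigma_1=1$, $\rho_1^2=1$, $\gamma_1^2=\gamma_2^2=1$, $\gamma_1\gamma_2=\gamma_2\gamma_1$, $\rho_1\gamma_1=\gamma_2\rho_1$, $\rho_1\sigma_1\rho_1=\gamma_2\gamma_1\sigma_1\gamma_1\gamma_2$, $\sigma_1\tau_1=\tau_1\sigma_1$, $\rho_1\tau_1\rho_1=\gamma_2\gamma_1\tau_1\gamma_1\gamma_2$. A representation of $\mathrm{STVB}_2$ in $M_3(\mathbb{C})$ is a monoid homomorphism; it is faithful if injective. For a $2\times2$ matrix $M$, $M\oplus1=\begin{pmatrix}M&0\\0&1\end{pmatrix}$ and $1\oplus M=\begin{pmatrix}1&0\\0&M\end{pmatrix}$. *)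

From mathcomp Require Import all_boot all_algebra complex.
From mathcomp Require Import Rstruct.
Set Implicit Arguments. Unset Strict Implicit. Unset Printing Implicit Defensive.
Import GRing.Theory Num.Theory.
Local Open Scope ring_scope.

Definition C : numClosedFieldType := (Rdefinitions.R)[i].

(* Generators of STVB_2: sigma_1, sigma_1^{-1}, rho_1, tau_1, gamma_1, gamma_2. *)
Inductive gen := gs | gsi | gr | gt | gg1 | gg2.

Definition word := seq gen.

Inductive stvb_rel : word -> word -> Prop :=
| rel_ssi : stvb_rel [:: gs; gsi] [::]
| rel_sis : stvb_rel [:: gsi; gs] [::]
| rel_rr  : stvb_rel [:: gr; gr] [::]
| rel_g1g1 : stvb_rel [:: gg1; gg1] [::]
| rel_g2g2 : stvb_rel [:: gg2; gg2] [::]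
| rel_g1g2 : stvb_rel [:: gg1; gg2] [:: gg2; gg1]
| rel_rg1 : stvb_rel [:: gr; gg1] [:: gg2; gr]
| rel_rsr : stvb_rel [:: gr; gs; gr] [:: gg2; gg1; gs; gg1; gg2]
| rel_st  : stvb_rel [:: gs; gt] [:: gt; gs]
| rel_rtr : stvb_rel [:: gr; gt; gr] [:: gg2; gg1; gt; gg1; gg2].

Inductive stvb_eq : word -> word -> Prop :=
| stvb_step u l r v : stvb_rel l r -> stvb_eq (u ++ l ++ v) (u ++ r ++ v)
| stvb_refl w : stvb_eq w w
| stvb_sym w1 w2 : stvb_eq w1 w2 -> stvb_eq w2 w1
| stvb_trans w1 w2 w3 : stvb_eq w1 w2 -> stvb_eq w2 w3 -> stvb_eq w1 w3.

Definition eval_word (eta : gen -> 'M[C]_3) (w : word) : 'M[C]_3 :=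
  foldr (fun x M => eta x *m M) 1%:M w.

Definition faithful (eta : gen -> 'M[C]_3) : Prop :=
  forall w1 w2 : word, eval_word eta w1 = eval_word eta w2 -> stvb_eq w1 w2.

Definition mx2 (a b c d : C) : 'M[C]_2 :=
  \matrix_(i < 2, j < 2)
    if i == ord0 then (if j == ord0 then a else b) else (if j == ord0 then c else d).

Definition dsum_r (M : 'M[C]_2) : 'M[C]_3 := block_mx M 0 0 (1%:M : 'M[C]_1).
Definition dsum_l (M : 'M[C]_2) : 'M[C]_3 := block_mx (1%:M : 'M[C]_1) 0 0 M.

Definition eta_of (S R T G : 'M[C]_2) (x : gen) : 'M[C]_3 :=
  match x with
  | gs => dsum_r S
  | gsi => dsum_r (invmx S)
  | gr => dsum_r R
  | gt => dsum_r T
  | gg1 => dsum_r G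
  | gg2 => dsum_l G
  end.

From mathcomp Require Import all_boot all_algebra complex.
From mathcomp Require Import ring.
Set Implicit Arguments. Unset Strict Implicit. Unset Printing Implicit Defensive.
Import GRing.Theory Num.Theory.
Local Open Scope ring_scope.

(* STVB_2 maps onto a subgroup of the symmetric group on four points, in which
   gamma_1 is nontrivial and rho_1, sigma_1 do not commute.  In cases (2)-(13)
   G = 1, so gamma_1 and the empty word have the same image; in case (1) the
   matrix S is a polynomial in R (S = a + (b/x) R), so rho_1 sigma_1 and
   sigma_1 rho_1 have the same image. *)

Section WordAction.

Variables (T : Type) (act : gen -> T -> T).

Definition act_word (w : word) (t : T) : T := foldr act t w.

Lemma act_word_cat u v t : act_word (u ++ v) t = act_word u (act_word v t).
Proof. by rewrite /act_word foldr_cat. Qed.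

Hypothesis act_stvb_rel : forall l r, stvb_rel l r -> act_word l =1 act_word r.

Lemma act_word_stvb_eq w1 w2 : stvb_eq w1 w2 -> act_word w1 =1 act_word w2.
Proof.
elim=> [u l r v /act_stvb_rel Hlr | // | {}w1 {}w2 _ IH | {}w1 w2' w3 _ IH1 _ IH2] t.
- by rewrite !act_word_cat Hlr.
- by rewrite IH.
- by rewrite IH1 IH2.
Qed.

End WordAction.

Definition perm4 (x : gen) (j : nat) : nat :=
  match x, j with
  | gg1, 0%N => 2%N | gg1, 2%N => 0%N
  | gg2, 1%N => 3%N | gg2, 3%N => 1%N
  | gr, 0%N => 3%N | gr, 3%N => 0%N | gr, 1%N => 2%N | gr, 2%N => 1%N
  | gs, 0%N => 1%N | gs, 1%N => 0%N
  | gsi, 0%N => 1%N | gsi, 1%N => 0%N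
  | _, j => j
  end.

Lemma perm4_stvb_rel l r : stvb_rel l r -> act_word perm4 l =1 act_word perm4 r.
Proof. by case=> j; do 4? case: j => [|j] //=; case: j. Qed.

Lemma gg1_neq_nil : ~ stvb_eq [:: gg1] [::].
Proof. by move/(act_word_stvb_eq perm4_stvb_rel)/(_ 0%N). Qed.

Lemma gr_gs_noncommute : ~ stvb_eq [:: gr; gs] [:: gs; gr].
Proof. by move/(act_word_stvb_eq perm4_stvb_rel)/(_ 0%N). Qed.

Lemma dsum_r1 : dsum_r 1%:M = 1%:M.
Proof. exact: esym (scalar_mx_block 2 1 1). Qed.

Lemma dsum_rM (A B : 'M[C]_2) : dsum_r (A *m B) = dsum_r A *m dsum_r B.
Proof.
have := @mulmx_block C 2 1 2 1 2 1 A 0 0 1%:M B 0 0 1%:M.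
rewrite !mulmx0 !mul0mx !addr0 !add0r mulmx1 => dsum_rM.
exact: esym dsum_rM.
Qed.

Lemma eval_word1 eta x : eval_word eta [:: x] = eta x.
Proof. exact: mulmx1. Qed.

Lemma not_faithful_trivial_gamma (S R T : 'M[C]_2) :
  ~ faithful (eta_of S R T 1%:M).
Proof.
move=> faithful_eta; apply: gg1_neq_nil; apply: faithful_eta.
by rewrite eval_word1 /= dsum_r1.
Qed.

Lemma not_faithful_commuting (S R T G : 'M[C]_2) :
  R *m S = S *m R -> ~ faithful (eta_of S R T G).
Proof.
move=> RS_comm faithful_eta; apply: gr_gs_noncommute; apply: faithful_eta.
by rewrite /eval_word /= !mulmx1 -!dsum_rM RS_comm.
Qed.

Lemma mulmx_mx2 (a b c d a' b' c' d' : C) :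
  mx2 a b c d *m mx2 a' b' c' d' =
  mx2 (a * a' + b * c') (a * b' + b * d') (c * a' + d * c') (c * b' + d * d').
Proof.
apply/matrixP => i j; rewrite !mxE !big_ord_recl big_ord0 !mxE addr0.
by case: i => [[|[|i]] Hi] //; case: j => [[|[|j]] Hj].
Qed.

Lemma mx2_antidiag_commute (a b x : C) : x != 0 ->
  mx2 0 x x^-1 0 *m mx2 a b (b / x ^+ 2) a = mx2 a b (b / x ^+ 2) a *m mx2 0 x x^-1 0.
Proof. by move=> x_neq0; rewrite !mulmx_mx2; congr mx2; field. Qed.

Theorem theorem4p2 :
  (* (1) *)
  (forall a b f g x : C, a ^+ 2 * x ^+ 2 - b ^+ 2 != 0 -> x != 0 ->
     ~ faithful (eta_of (mx2 a b (b / x ^+ 2) a) (mx2 0 x x^-1 0)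
                        (mx2 f g (g / x ^+ 2) f) (mx2 (-1) 0 0 1))) /\
  (* (2) *)
  (forall a b f g x z : C,
     a ^+ 2 * x ^+ 2 + 2 * a * b * x * z - b ^+ 2 + b ^+ 2 * z ^+ 2 != 0 -> x != 0 ->
     ~ faithful (eta_of (mx2 a b ((b - b * z ^+ 2) / x ^+ 2) ((a * x + 2 * b * z) / x))
                        (mx2 (- z) x ((1 - z ^+ 2) / x) z)
                        (mx2 f g ((g - g * z ^+ 2) / x ^+ 2) ((f * x + 2 * g * z) / x))
                        1%:M)) /\
  (* (3) *)
  (forall a b c d f g : C, a * d - b * c != 0 -> b != 0 ->
     ~ faithful (eta_of (mx2 a b c d) (- 1%:M)
                        (mx2 f g (c * g / b) ((b * f - a * g + d * g) / b)) 1%:M)) /\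
  (* (4) *)
  (forall a b c d f g : C, a * d - b * c != 0 -> b != 0 ->
     ~ faithful (eta_of (mx2 a b c d) 1%:M
                        (mx2 f g (c * g / b) ((b * f - a * g + d * g) / b)) 1%:M)) /\
  (* (5) *)
  (forall a f g h k : C, a != 0 ->
     ~ faithful (eta_of (a%:M) (- 1%:M) (mx2 f g h k) 1%:M)) /\
  (* (6) *)
  (forall a c d f h : C, a * d != 0 -> c != 0 ->
     ~ faithful (eta_of (mx2 a 0 c d) (- 1%:M)
                        (mx2 f 0 h ((c * f - a * h + d * h) / c)) 1%:M)) /\
  (* (7) *)
  (forall a c f h y : C, a * (- 2 * c + a * y) != 0 -> y != 0 ->
     ~ faithful (eta_of (mx2 a 0 c ((- 2 * c + a * y) / y)) (mx2 1 0 y (-1))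
                        (mx2 f 0 h ((- 2 * h + f * y) / y)) 1%:M)) /\
  (* (8) *)
  (forall a c f h y : C, a * (2 * c + a * y) != 0 -> y != 0 ->
     ~ faithful (eta_of (mx2 a 0 c ((2 * c + a * y) / y)) (mx2 (-1) 0 y 1)
                        (mx2 f 0 h ((2 * h + f * y) / y)) 1%:M)) /\
  (* (9) *)
  (forall a f g h k : C, a != 0 ->
     ~ faithful (eta_of (a%:M) 1%:M (mx2 f g h k) 1%:M)) /\
  (* (10) *)
  (forall a c d f h : C, a * d != 0 -> c != 0 ->
     ~ faithful (eta_of (mx2 a 0 c d) 1%:M
                        (mx2 f 0 h ((c * f - a * h + d * h) / c)) 1%:M)) /\
  (* (11) *)
  (forall a d f k : C, a * d != 0 ->
     ~ faithful (eta_of (mx2 a 0 0 d) (mx2 1 0 0 (-1)) (mx2 f 0 0 k) 1%:M)) /\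
  (* (12) *)
  (forall a d f k : C, a * d != 0 ->
     ~ faithful (eta_of (mx2 a 0 0 d) (mx2 (-1) 0 0 1) (mx2 f 0 0 k) 1%:M)) /\
  (* (13) *)
  (forall a d f k : C, a * d != 0 ->
     ~ faithful (eta_of (mx2 a 0 0 d) 1%:M (mx2 f 0 0 k) 1%:M)).
Proof.
split.
  move=> a b f g x _ x_neq0.
  exact/not_faithful_commuting/mx2_antidiag_commute.
by do 12? split; move=> *; apply: not_faithful_trivial_gamma.
Qed.
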